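(* Let $n\in\mathbb{N}$, $h_0>0$, $h_1,\ldots,h_n\in\mathbb{C}$, and $H(z)\coloneq h_0+2\sum_{k=1}^nh_kz^k$. There is exactly one such polynomial $H$ (for given $h_0$) satisfying all of: $\operatorname{Re}H(z)>0$ for all $z\in\Delta$; $h_n>0$; all $n$ roots of $H$ lie on the unit circle $\{|z|=1\}$. Namely, $H(z)=h_0(1+z^n)$.
   Context: $\Delta=\{z\in\mathbb{C}:|z|<1\}$ is the open unit disk. *)

From HB Require Import structures.
From mathcomp Require Import all_boot all_order all_algebra.
From mathcomp Require Import reals.
From mathcomp Require Export complex.
Set Implicit Arguments. Unset Strict Implicit. Unset Printing Implicit Defensive.
Import Order.TTheory GRing.Theory Num.Theory.
Local Open Scope ring_scope.

Definition Hfun (R : realType) (n : nat) (h0 : R[i]) (h : nat -> R[i]) (z : R[i]) : R[i] :=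
  h0 + 2%:R * \sum_(1 <= k < n.+1) h k * z ^+ k.

Definition in_disk (R : realType) (z : R[i]) : Prop := `|z| < 1.

From HB Require Import structures.
From mathcomp Require Import all_boot all_order all_algebra.
From mathcomp Require Import reals complex.
From mathcomp Require Import cyclic separable cyclotomic.
From mathcomp Require Import ring lra zify.
Import Order.TTheory GRing.Theory Num.Theory.
Set Implicit Arguments. Unset Strict Implicit. Unset Printing Implicit Defensive.
Local Open Scope ring_scope.

(* Write P for the polynomial H. Its roots lie on the unit circle, so
   |P(0)| = |lead P|, i.e. h_0 = 2 h_n. Take w with w^n = -1 and a primitive
   n-th root of unity z: at the nodes w z^j the terms h_0 and 2 h_n (w z^j)^n
   cancel, so P(w z^j) and n h_0 + w z^j P'(w z^j) are the discrete Fourier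
   transforms of the middle coefficients b_k = 2 h_k w^k and of k b_k. The
   values P(w z^j) sum to 0 and have nonnegative real parts since Re P > 0 in
   the disk, so Re P vanishes at every node; each node is then a boundary
   minimum of Re P, so the tangential derivative Im (x P'(x)) vanishes there as
   well. Inverting the transform gives b_m + conj b_(n-m) = 0 and
   m b_m - (n - m) conj b_(n-m) = 0, whence n b_m = 0 for 0 < m < n. *)

Lemma prim_root_exists (F : closedFieldType) n :
  n%:R != 0 :> F -> {z : F | n.-primitive_root z}.
Proof.
move=> n_neq0; have n_gt0 : (0 < n)%N.
  by rewrite lt0n; apply: contraNneq n_neq0 => ->.
have [rs Ers] := closed_field_poly_normal ('X^n - 1 : {poly F}).
rewrite (monicP (monicXnsubC _ n_gt0)) scale1r in Ers.
have rs_unity : all n.-unity_root rs.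
  by apply/allP => z; rewrite -root_prod_XsubC -Ers.
have rs_uniq : uniq rs by rewrite -separable_prod_XsubC -Ers separable_Xn_sub_1.
have rs_size : (n <= size rs)%N.
  by rewrite -ltnS -(size_prod_XsubC rs id) -Ers size_XnsubC.
have := has_prim_root n_gt0 rs_unity rs_uniq rs_size.
by case/hasP/sig2W => z _ prim_z; exists z.
Qed.

Lemma prim_root_sum_exprX (F : idomainType) n (z : F) e : n.-primitive_root z ->
  \sum_(j < n) (z ^+ e) ^+ j = if (n %| e)%N then n%:R else 0.
Proof.
move=> prim_z; have [n_dvd_e | n_ndvd_e] := ifPn.
  have /eqP -> : z ^+ e == 1 by rewrite -(prim_order_dvd prim_z).
  under eq_bigr do rewrite expr1n.
  by rewrite sumr_const card_ord.
have ze_neq1 : z ^+ e - 1 != 0 by rewrite subr_eq0 -(prim_order_dvd prim_z).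
apply: (mulfI ze_neq1); rewrite -subrX1 mulr0 exprAC (prim_expr_order prim_z).
by rewrite expr1n subrr.
Qed.

Lemma dvdn_subnD_eq n m k : (0 < m <= n)%N -> (0 < k < n)%N ->
  (n %| n - m + k)%N = (k == m).
Proof.
move=> /andP[m_gt0 le_mn] /andP[k_gt0 lt_kn].
have [lt_km | lt_mk | ->] := ltngtP k m; last by rewrite subnK ?dvdnn.
- by rewrite gtnNdvd //; lia.
- rewrite (_ : n - m + k = n + (k - m))%N; last by lia.
  by rewrite dvdn_addr // gtnNdvd //; lia.
Qed.

Section DiscreteFourier.
Variables (F : idomainType) (n : nat) (z : F).
Hypothesis prim_z : n.-primitive_root z.

Lemma prim_root_dft_coef (c : nat -> F) m : (0 < m < n)%N ->
  \sum_(j < n) (z ^+ j) ^+ (n - m) * \sum_(1 <= k < n) c k * (z ^+ j) ^+ k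
    = n%:R * c m.
Proof.
move=> /andP[m_gt0 lt_mn].
under eq_bigr do rewrite mulr_sumr.
rewrite exchange_big /=.
transitivity (\sum_(1 <= k < n | k == m) n%:R * c k); last first.
  by rewrite big_nat1_eq m_gt0 lt_mn.
rewrite [RHS]big_mkcond /=; apply: eq_big_nat => k /andP[k_gt0 lt_kn].
transitivity (c k * \sum_(j < n) (z ^+ (n - m + k)) ^+ j).
  rewrite mulr_sumr; apply: eq_bigr => j _.
  by rewrite mulrCA -exprD -!exprM mulnC mulnDl.
rewrite prim_root_sum_exprX // dvdn_subnD_eq; last 2 first.
- by rewrite m_gt0 ltnW.
- by rewrite k_gt0.
by case: eqP => _; rewrite ?mulr0 // mulrC.
Qed.

End DiscreteFourier.

Lemma ge0_of_affine_gt0 (R : realFieldType) (c A : R) :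
  (forall t, 0 < t < 1 -> 0 < c + t * A) -> 0 <= c.
Proof.
move=> affine_gt0; rewrite leNgt; apply/negP => c_lt0.
have A_gt0 : 0 < A by have := affine_gt0 (1 / 2); lra.
(* chosen so that c + t A = t c *)
pose t := - c / (A - c).
have tE : t * (A - c) = - c by rewrite divfK // gt_eqF //; lra.
have t_gt0 : 0 < t by rewrite divr_gt0 //; lra.
have : 0 < c + t * A by apply: affine_gt0; rewrite t_gt0 ltr_pdivrMr; lra.
nra.
Qed.

Lemma eq0_of_quadratic_gt0 (R : realFieldType) (c A : R) :
  (forall t, 0 < `|t| < 1 -> 0 < c * t + t ^+ 2 * A) -> c = 0.
Proof.
move=> quad_gt0; apply/eqP; rewrite eq_le -oppr_ge0.
apply/andP; split; apply: (@ge0_of_affine_gt0 _ _ A) => t /andP[t_gt0 t_lt1].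
- have := quad_gt0 (- t); rewrite normrN gtr0_norm // t_gt0 t_lt1 sqrrN.
  by move=> /(_ isT); nra.
- have := quad_gt0 t; rewrite gtr0_norm // t_gt0 t_lt1.
  by move=> /(_ isT); nra.
Qed.

Lemma horner_taylor2 (F : comNzRingType) (p : {poly F}) (w : F) :
  exists T : {poly F}, forall x,
    p.[x] = p.[w] + (x - w) * p^`().[w] + (x - w) ^+ 2 * T.[x].
Proof.
have /factor_theorem[q Ep] : root (p - p.[w]%:P) w.
  by rewrite rootE !hornerE subrr.
have /factor_theorem[T Eq] : root (q - q.[w]%:P) w.
  by rewrite rootE !hornerE subrr.
have {}Ep : p = q * ('X - w%:P) + p.[w]%:P by rewrite -Ep subrK.
have {}Eq : q = T * ('X - w%:P) + q.[w]%:P by rewrite -Eq subrK.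
have deriv_w : p^`().[w] = q.[w].
  rewrite [in LHS]Ep derivD derivC addr0 derivM derivXsubC mulr1.
  by rewrite !hornerE subrr mulr0 add0r.
exists T => x; rewrite deriv_w [in LHS]Ep [in LHS]Eq !hornerE; ring.
Qed.

Lemma norm_horner_le (F : numDomainType) (p : {poly F}) x : `|x| <= 1 ->
  `|p.[x]| <= \sum_(i < size p) `|p`_i|.
Proof.
move=> x_le1; rewrite horner_coef; apply: le_trans (ler_norm_sum _ _ _) _.
apply: ler_sum => i _; rewrite normrM normrX ler_piMr ?exprn_ile1 //.
Qed.

Section ComplexParts.
Variable R : rcfType.
Local Notation C := R[i].
Local Open Scope complex_scope.

Lemma Re_add (x y : C) : complex.Re (x + y) = complex.Re x + complex.Re y.
Proof. exact: raddfD. Qed.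

Lemma Im_add (x y : C) : complex.Im (x + y) = complex.Im x + complex.Im y.
Proof. exact: raddfD. Qed.

Lemma Re_mul (x y : C) :
  complex.Re (x * y)
    = complex.Re x * complex.Re y - complex.Im x * complex.Im y.
Proof. by case: x; case: y. Qed.

Lemma Re_realM (r : R) (z : C) : complex.Re (r%:C * z) = r * complex.Re z.
Proof. by case: z => a b /=; rewrite mul0r subr0. Qed.

Lemma Re_le (x y : C) : x <= y -> complex.Re x <= complex.Re y.
Proof. by rewrite lecE => /andP[]. Qed.

Lemma Re_le_norm (z : C) : complex.Re z <= complex.Re `|z|.
Proof. exact: le_trans (ler_norm _) (Re_le (normc_ge_Re z)). Qed.

Lemma Re_sqr_norm_realM (t : R) (z : C) :
  complex.Re (`|t%:C * z| ^+ 2) = t ^+ 2 * complex.Re (`|z| ^+ 2).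
Proof.
by rewrite normrM exprMn real_normK ?complex_real // -rmorphXn Re_realM.
Qed.

Lemma Re_horner_taylor2_le (p : {poly C}) (w : C) : exists K : R, forall x,
  `|x| <= 1 -> complex.Re p.[x] <= complex.Re (p.[w] + (x - w) * p^`().[w])
                                   + K * complex.Re (`|x - w| ^+ 2).
Proof.
have [T ET] := horner_taylor2 p w; set M := \sum_(i < size T) `|T`_i|.
have M_real : M \is Num.real by rewrite ger0_real ?sumr_ge0.
exists (complex.Re M) => x x_le1.
rewrite ET Re_add lerD2l -Re_realM RRe_real //.
apply: le_trans (Re_le_norm _) (Re_le _).
by rewrite normrM normrX (mulrC M) ler_wpM2l ?exprn_ge0 ?norm_horner_le.
Qed.

End ComplexParts.

Section BoundaryBehaviour.
Variables (R : rcfType) (p : {poly R[i]}) (w : R[i]).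
Hypothesis Re_gt0 : forall z, `|z| < 1 -> 0 < complex.Re p.[z].
Hypothesis w_unit : `|w| = 1.
Local Open Scope complex_scope.

Lemma Re_horner_ge0_boundary : 0 <= complex.Re p.[w].
Proof.
have [K taylorK] := Re_horner_taylor2_le p w.
set a := complex.Re (w * p^`().[w]).
apply: (@ge0_of_affine_gt0 _ _ (- a + `|K|)) => t /andP[t_gt0 t_lt1].
pose x := (1 - t)%:C * w.
have x_lt1 : `|x| < 1.
  by rewrite normrM w_unit mulr1 ger0_norm ?ler0c ?ltcR; lra.
have := taylorK x (ltW x_lt1).
have -> : x - w = (- t)%:C * w by rewrite /x rmorphB rmorphN /=; ring.
rewrite Re_sqr_norm_realM w_unit expr1n Re_add -mulrA Re_realM -/a.
have : K * t ^+ 2 <= `|K| * t.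
  have t2_le_t : t ^+ 2 <= t by nra.
  exact: le_trans (ler_wpM2r (sqr_ge0 t) (ler_norm K))
                  (ler_wpM2l (normr_ge0 K) t2_le_t).
have := Re_gt0 x_lt1; rewrite sqrrN (_ : complex.Re 1 = 1) //; nra.
Qed.

Lemma Im_mul_deriv_boundary :
  complex.Re p.[w] = 0 -> complex.Im (w * p^`().[w]) = 0.
Proof.
move=> Re_w0; have [K taylorK] := Re_horner_taylor2_le p w.
set y := w * p^`().[w].
apply/eqP; rewrite -oppr_eq0; apply/eqP.
apply: (@eq0_of_quadratic_gt0 _ _ (- complex.Re y + 2 * `|K|)).
move=> t /andP[t_gt0 t_lt1].
(* Along x = w (1 - t^2 + i t), inside the disk, Re p(x) = - t Im y + O(t^2). *)
pose u : R[i] := (- t ^+ 2) +i* t.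
have t2_lt1 : t ^+ 2 < 1 by rewrite -real_normK ?num_real // expr_lt1.
have t2_gt0 : 0 < t ^+ 2 by rewrite -real_normK ?num_real // exprn_gt0.
have x_lt1 : `|w + w * u| < 1.
  rewrite -{1}(mulr1 w) -mulrDr normrM w_unit mul1r normc_def /=.
  rewrite (_ : 1 = 1%:C) // ltcR -[X in _ < X]sqrtr1 ltr_sqrt //; nra.
have := taylorK _ (ltW x_lt1).
rewrite addrAC subrr add0r -mulrA mulrCA -/y.
rewrite normrM w_unit mul1r -add_Re2_Im2 Re_add Re_w0 add0r Re_mul /=.
have : K * ((- t ^+ 2) ^+ 2 + t ^+ 2) <= `|K| * (2 * t ^+ 2).
  have t4_le : (- t ^+ 2) ^+ 2 + t ^+ 2 <= 2 * t ^+ 2 by nra.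
  apply: le_trans (ler_wpM2r _ (ler_norm K)) (ler_wpM2l (normr_ge0 K) t4_le).
  by rewrite addr_ge0 ?sqr_ge0.
have := Re_gt0 x_lt1; nra.
Qed.

End BoundaryBehaviour.

Lemma normr_eq1_exprn (F : numDomainType) n (x : F) :
  (0 < n)%N -> `|x ^+ n| = 1 -> `|x| = 1.
Proof. by move=> n_gt0 /eqP; rewrite normrX pexpr_eq1 // => /eqP. Qed.

Lemma norm_horner0_unit_roots (F : numClosedFieldType) (p : {poly F}) :
  (forall x, root p x -> `|x| = 1) -> `|p.[0]| = `|lead_coef p|.
Proof.
move=> roots_unit; have [-> | p_neq0] := eqVneq p 0.
  by rewrite horner0 lead_coef0.
have [rs Ep] := closed_field_poly_normal p.
rewrite {1}Ep hornerZ horner_prod normrM normr_prod big_seq big1 ?mulr1 //.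
move=> x x_rs.
rewrite hornerXsubC sub0r normrN roots_unit // Ep rootZ ?lead_coef_eq0 //.
by rewrite root_prod_XsubC.
Qed.

Lemma poly_eq_horner (F : numDomainType) (p q : {poly F}) :
  (forall x, p.[x] = q.[x]) -> p = q.
Proof.
move=> Epq; apply/eqP; rewrite -subr_eq0; apply/eqP.
apply: (@roots_geq_poly_eq0 _ _ [seq i%:R | i <- iota 0 (size (p - q))]).
- by apply/allP => x _; rewrite rootE !hornerE Epq subrr.
- by rewrite map_inj_uniq ?iota_uniq // => i j /eqP; rewrite eqr_nat => /eqP.
- by rewrite size_map size_iota.
Qed.

Lemma conjc_unity_root_expr (R : rcfType) (x : R[i]) n k :
  (0 < n)%N -> x ^+ n = 1 -> (k <= n)%N -> (x ^+ k)^*%C = x ^+ (n - k).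
Proof.
move=> n_gt0 xn1 le_kn.
have x_unit : `|x| = 1 by apply: normr_eq1_exprn n_gt0 _; rewrite xn1 normr1.
have xk_neq0 : x ^+ k != 0 by rewrite expf_neq0 // -normr_eq0 x_unit oner_neq0.
apply: (mulIf xk_neq0); rewrite -exprD subnK // xn1 mulrC -sqr_normc.
by rewrite normrX x_unit !expr1n.
Qed.

Section ConjugateDiscreteFourier.
Variables (R : rcfType) (n : nat) (z : R[i]).
Hypothesis prim_z : n.-primitive_root z.

Lemma prim_root_dft_conj_coef (c : nat -> R[i]) m : (0 < m < n)%N ->
  \sum_(j < n) (z ^+ j) ^+ (n - m) * (\sum_(1 <= k < n) c k * (z ^+ j) ^+ k)^*%C
    = n%:R * (c (n - m)%N)^*%C.
Proof.
move=> /andP[m_gt0 lt_mn]; have n_gt0 := prim_order_gt0 prim_z.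
rewrite -(prim_root_dft_coef prim_z (fun k => (c (n - k)%N)^*%C)) ?m_gt0 //.
apply: eq_bigr => j _; congr (_ * _).
rewrite rmorph_sum /= big_nat_rev /=; apply: eq_big_nat => k /andP[k_gt0 lt_kn].
rewrite add1n subSS rmorphM /= (conjc_unity_root_expr (n := n)) ?leq_subr //.
  by rewrite subKn // ltnW.
by rewrite exprAC (prim_expr_order prim_z) expr1n.
Qed.

End ConjugateDiscreteFourier.

Section HPolynomial.
Variables (R : realType) (n : nat) (h0 : R[i]) (h : nat -> R[i]).

Definition Hcoef i : R[i] := if i == 0%N then h0 else 2 * h i.
Definition Hpoly : {poly R[i]} := \poly_(i < n.+1) Hcoef i.

Lemma horner_Hpoly x : Hpoly.[x] = Hfun n h0 h x.
Proof.
rewrite horner_poly big_ord_recl /Hfun big_add1 big_mkord /= mulr1 mulr_sumr.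
by congr (_ + _); apply: eq_bigr => i _; rewrite /Hcoef /= mulrA.
Qed.

Lemma mul_horner_deriv_Hpoly x :
  x * Hpoly^`().[x] = \sum_(1 <= i < n.+1) (i%:R * Hcoef i) * x ^+ i.
Proof.
have -> : Hpoly^`() = \poly_(i < n) (Hcoef i.+1 *+ i.+1).
  apply/polyP => i; rewrite coef_deriv !coef_poly ltnS.
  by case: ltnP => _; rewrite ?mul0rn.
rewrite horner_poly big_add1 big_mkord mulr_sumr.
by apply: eq_bigr => i _; rewrite exprS -mulr_natl; ring.
Qed.

End HPolynomial.

Section Rigidity.
Variables (R : realType) (n : nat) (h0 : R[i]) (h : nat -> R[i]).
Hypotheses (n_gt0 : (0 < n)%N) (h0_gt0 : 0 < h0) (hn_gt0 : 0 < h n).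
Hypothesis Re_Hfun_gt0 : forall x, in_disk x -> 0 < complex.Re (Hfun n h0 h x).
Hypothesis Hfun_roots : forall x, Hfun n h0 h x = 0 -> `|x| = 1.

Local Notation P := (Hpoly n h0 h).

Let Re_P_gt0 x : `|x| < 1 -> 0 < complex.Re P.[x].
Proof. by rewrite horner_Hpoly; exact: Re_Hfun_gt0. Qed.

Lemma h0_eq_2hn : h0 = 2 * h n.
Proof.
have hn2_gt0 : 0 < 2 * h n by rewrite mulr_gt0 ?ltr0n.
have lcP : lead_coef P = 2 * h n.
  by rewrite lead_coef_poly //= /Hcoef gtn_eqF // gt_eqF.
have : `|P.[0]| = `|lead_coef P|.
  apply: norm_horner0_unit_roots => x /rootP.
  by rewrite horner_Hpoly; exact: Hfun_roots.
by rewrite lcP horner_coef0 coef_poly /= gtr0_norm // gtr0_norm.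
Qed.

Variables (w z : R[i]).
Hypotheses (w_exprn : w ^+ n = -1) (prim_z : n.-primitive_root z).

Let node j := w * z ^+ j.
Let b k := 2 * h k * w ^+ k.

Lemma node_exprn j : node j ^+ n = -1.
Proof.
by rewrite exprMn w_exprn exprAC (prim_expr_order prim_z) expr1n mulr1.
Qed.

Lemma norm_node j : `|node j| = 1.
Proof. by apply: normr_eq1_exprn n_gt0 _; rewrite node_exprn normrN normr1. Qed.

Lemma horner_Hpoly_node j : P.[node j] = \sum_(1 <= k < n) b k * (z ^+ j) ^+ k.
Proof.
rewrite horner_Hpoly /Hfun big_nat_recr //= node_exprn mulrDr {1}h0_eq_2hn.
rewrite mulr_sumr mulrN1 mulrN addrCA subrr addr0.
by apply: eq_bigr => k _; rewrite /node /b exprMn exprAC; ring.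
Qed.

Lemma mul_horner_deriv_Hpoly_node j :
  node j * P^`().[node j]
    = \sum_(1 <= k < n) (k%:R * b k) * (z ^+ j) ^+ k - n%:R * h0.
Proof.
rewrite mul_horner_deriv_Hpoly big_nat_recr //= node_exprn /Hcoef gtn_eqF //.
rewrite -h0_eq_2hn mulrN1 -mulrN.
congr (_ + _); apply: eq_big_nat => k /andP[k_gt0 _].
by rewrite gtn_eqF // /node /b exprMn exprAC; ring.
Qed.

Lemma Re_Hpoly_node (j : 'I_n) : complex.Re P.[node j] = 0.
Proof.
have sum_node0 : \sum_(i < n) P.[node i] = 0.
  under eq_bigr do rewrite horner_Hpoly_node.
  rewrite exchange_big big1_seq //= => k.
  rewrite mem_index_iota => /andP[k_gt0 lt_kn].
  rewrite -mulr_sumr; under eq_bigr do rewrite exprAC.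
  by rewrite prim_root_sum_exprX // gtnNdvd // mulr0.
have : \sum_(i < n) complex.Re P.[node i] = 0 by rewrite -raddf_sum sum_node0.
by move/psumr_eq0P => -> // i _; apply: Re_horner_ge0_boundary (norm_node i).
Qed.

Lemma Im_mul_deriv_Hpoly_node (j : 'I_n) :
  complex.Im (node j * P^`().[node j]) = 0.
Proof.
exact: Im_mul_deriv_boundary Re_P_gt0 (norm_node j) (Re_Hpoly_node j).
Qed.

Lemma mid_coef_eq0 m : (0 < m < n)%N -> h m = 0.
Proof.
move=> lt0mn; have /andP[m_gt0 lt_mn] := lt0mn.
pose X j := \sum_(1 <= k < n) b k * (z ^+ j) ^+ k.
pose Z j := \sum_(1 <= k < n) (k%:R * b k) * (z ^+ j) ^+ k.
have X_conj (j : 'I_n) : X j + (X j)^*%C = 0.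
  by rewrite /X -horner_Hpoly_node addcJ Re_Hpoly_node rmorph0 mulr0.
have Z_conj (j : 'I_n) : Z j - (Z j)^*%C = 0.
  have -> : Z j = node j * P^`().[node j] + n%:R * h0.
    by rewrite mul_horner_deriv_Hpoly_node subrK.
  rewrite subcJ Im_add Im_mul_deriv_Hpoly_node ger0_Im ?mulr_ge0 ?ler0n ?ltW //.
  by rewrite addr0 rmorph0 mulr0 mul0r.
have dftX : n%:R * b m + n%:R * (b (n - m)%N)^*%C = 0.
  rewrite -(prim_root_dft_coef prim_z b lt0mn).
  rewrite -(prim_root_dft_conj_coef prim_z b lt0mn).
  by rewrite -big_split big1 // => i _ /=; rewrite -mulrDr X_conj mulr0.
have dftZ : n%:R * (m%:R * b m) - n%:R * ((n - m)%:R * b (n - m)%N)^*%C = 0.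
  pose kb k := k%:R * b k.
  rewrite -(prim_root_dft_coef prim_z kb lt0mn).
  rewrite -(prim_root_dft_conj_coef prim_z kb lt0mn).
  by rewrite -sumrB big1 // => i _; rewrite -mulrBr Z_conj mulr0.
rewrite rmorphM /= conjc_nat natrB ?(ltnW lt_mn) // in dftZ.
have : n%:R * n%:R * b m = 0.
  move: dftX dftZ; set u := b m; set v := (b (n - m)%N)^*%C => dftX dftZ.
  have -> : n%:R * n%:R * u
      = (n%:R * (m%:R * u) - n%:R * ((n%:R - m%:R) * v))
        + (n%:R - m%:R) * (n%:R * u + n%:R * v) by ring.
  by rewrite dftX dftZ mulr0 addr0.
have n_neq0 : n%:R != 0 :> R[i] by rewrite pnatr_eq0 -lt0n.
have w_neq0 : w != 0.
  rewrite -normr_eq0 (normr_eq1_exprn n_gt0) ?oner_neq0 //.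
  by rewrite w_exprn normrN normr1.
move/eqP; rewrite /b !mulf_eq0 (negPf n_neq0) pnatr_eq0 expf_eq0.
by rewrite (negPf w_neq0) andbF /= orbF => /eqP ->.
Qed.

Lemma Hfun_closed_form x : Hfun n h0 h x = h0 * (1 + x ^+ n).
Proof.
rewrite /Hfun big_nat_recr //= big1_seq ?add0r => [|k].
  by rewrite h0_eq_2hn; ring.
by rewrite mem_index_iota => /andP[_ /mid_coef_eq0 ->]; rewrite mul0r.
Qed.

End Rigidity.

Section ClosedForm.
Variables (R : realType) (n : nat) (h0 : R[i]) (h : nat -> R[i]).
Hypotheses (n_gt0 : (0 < n)%N) (h0_gt0 : 0 < h0).
Hypothesis Hfun_eq : forall x, Hfun n h0 h x = h0 * (1 + x ^+ n).

Lemma closed_form_Re_gt0 x : in_disk x -> 0 < complex.Re (Hfun n h0 h x).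
Proof.
rewrite /in_disk Hfun_eq -(RRe_real (gtr0_real h0_gt0)) Re_realM Re_add.
move=> x_lt1.
have Re_h0_gt0 : 0 < complex.Re h0 by move: h0_gt0; rewrite ltcE => /andP[].
have Re_xn_lt1 : `|complex.Re (x ^+ n)| < 1.
  apply: le_lt_trans (Re_le (normc_ge_Re _)) _.
  have : `|x ^+ n| < 1 by rewrite normrX expr_lt1.
  by rewrite ltcE => /andP[].
rewrite (_ : complex.Re 1 = 1) // mulr_gt0 //.
by move: Re_xn_lt1; rewrite ltr_norml; lra.
Qed.

Lemma closed_form_hn_gt0 : 0 < h n.
Proof.
have EP : Hpoly n h0 h = h0%:P + h0 *: 'X^n.
  by apply: poly_eq_horner => x; rewrite horner_Hpoly Hfun_eq !hornerE; ring.
have := congr1 (fun p : {poly R[i]} => p`_n) EP.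
rewrite coef_poly ltnSn /Hcoef gtn_eqF // coefD coefC gtn_eqF // coefZ coefXn.
rewrite eqxx mulr1 add0r => h0_eq_2hn.
by move: h0_gt0; rewrite -h0_eq_2hn pmulr_rgt0 ?ltr0n.
Qed.

Lemma closed_form_root_unit x : Hfun n h0 h x = 0 -> `|x| = 1.
Proof.
rewrite Hfun_eq => /eqP; rewrite mulf_eq0 gt_eqF //= addr_eq0 => /eqP xn.
by apply: normr_eq1_exprn n_gt0 _; rewrite -normrN -xn normr1.
Qed.

End ClosedForm.

Theorem mainTheorem5 (R : realType) (n : nat) (hn1 : (1 <= n)%N)
    (h0 : R[i]) (h : nat -> R[i]) (h0pos : 0 < h0) :
  ((forall z : R[i], in_disk z -> 0 < complex.Re (Hfun n h0 h z))
   /\ 0 < h n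
   /\ (forall z : R[i], Hfun n h0 h z = 0 -> `|z| = 1))
  <-> (forall z : R[i], Hfun n h0 h z = h0 * (1 + z ^+ n)).
Proof.
split => [[Re_gt0 [hn_gt0 roots_unit]] | Hfun_eq].
- have n_neq0 : n%:R != 0 :> R[i] by rewrite pnatr_eq0 -lt0n.
  have [z prim_z] := prim_root_exists n_neq0.
  have w_exprn : n.-root (-1 : R[i]) ^+ n = -1 by rewrite rootCK.
  move=> x; exact: (Hfun_closed_form hn1 h0pos hn_gt0 Re_gt0 roots_unit
                      w_exprn prim_z x).
- split; first exact: closed_form_Re_gt0.
  split; first exact: closed_form_hn_gt0 hn1 h0pos Hfun_eq.
  exact: closed_form_root_unit.
Qed.
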